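(* Let $\epsilon:[0,\infty)\to\mathbb{R}$ be a differentiable function with $\epsilon(t)>0$ and $\dot\epsilon(t)<0$ for all $t$, and $\lim_{t\to\infty}\dot\epsilon(t)\,\epsilon^{-2}(t)=0$. Then $\lim_{t\to\infty}e^{-t}\epsilon^{-1}(t)=0$. *)

From Stdlib Require Import Reals.
From Coquelicot Require Import Coquelicot.
Open Scope R_scope.

(* [is_derive_nonneg f t l]: f, viewed as a function on [0, +oo), has
   derivative l at t >= 0; the difference quotient is taken only over
   increments h <> 0 with t + h in [0, +oo) (one-sided at t = 0). *)
Definition is_derive_nonneg (f : R -> R) (t l : R) : Prop :=
  filterlim (fun h => (f (t + h) - f t) / h)
    (within (fun h => h <> 0 /\ 0 <= t + h) (locally 0))
    (locally l).

(* Since (1/ε)' = -ε'/ε² tends to 0, it is eventually at most 1, so by the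
   mean value theorem 1/ε grows at most linearly: 1/ε(t) <= C + t for large t.
   Hence 0 < e^{-t}/ε(t) <= e^{-t}(C + t), which tends to 0. *)

From Stdlib Require Import Reals Lra.
From Coquelicot Require Import Coquelicot.
Open Scope R_scope.

Lemma filter_le_locally'_within_nonneg (t : R) :
  0 < t ->
  filter_le (locally' 0) (within (fun h => h <> 0 /\ 0 <= t + h) (locally 0)).
Proof.
  intros Ht P HP. unfold locally', within in *.
  assert (Hnear : locally 0 (fun h => - t < h)) by (apply open_gt; lra).
  generalize (filter_and _ _ HP Hnear). apply filter_imp.
  intros h [HPh Hh] Hh0. apply HPh. split; [exact Hh0 | lra].
Qed.

Lemma is_derive_of_is_derive_nonneg (f : R -> R) (t l : R) :
  0 < t -> is_derive_nonneg f t l -> is_derive f t l.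
Proof.
  intros Ht Hf. apply is_derive_Reals.
  assert (Hq : is_lim (fun h => (f (t + h) - f t) / h) 0 l).
  { exact (filterlim_filter_le_1 _ (filter_le_locally'_within_nonneg t Ht) Hf). }
  intros e He.
  destruct (proj2 (is_lim_spec _ _ _) Hq (mkposreal e He)) as [d Hd].
  exists d. intros h Hh0 Hh. apply Hd; [| exact Hh0].
  change (Rabs (h - 0) < d). rewrite Rminus_0_r. exact Hh.
Qed.

Lemma le_affine_of_derive_le (g dg : R -> R) (a M : R) :
  (forall x, a <= x -> is_derive g x (dg x)) ->
  (forall x, a <= x -> dg x <= M) ->
  forall b, a <= b -> g b <= g a + M * (b - a).
Proof.
  intros Hg HM b Hab.
  destruct (Rle_lt_or_eq_dec a b Hab) as [Hlt | <-]; [| lra].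
  destruct (MVT_cor3 g dg a b Hlt) as [c [Hac [Hcb Hgb]]].
  { intros x Hax _. apply is_derive_Reals, Hg, Hax. }
  rewrite Hgb. apply Rplus_le_compat_l, Rmult_le_compat_r; [lra | apply HM, Hac].
Qed.

Lemma is_lim_exp_opp_mul_affine (C : R) :
  is_lim (fun t => exp (- t) * (C + t)) p_infty 0.
Proof.
  assert (Hopp : forall f, is_lim f m_infty 0 -> is_lim (fun t => f (- t)) p_infty 0).
  { intros f Hf. exact (filterlim_comp _ _ _ Ropp f _ _ _ (filterlim_Rbar_opp p_infty) Hf). }
  apply (is_lim_ext (fun t => C * exp (- t) - (- t * exp (- t)))).
  { intros t. ring. }
  replace (Finite 0) with (Finite (C * 0 - 0)) by (f_equal; ring).
  apply is_lim_minus'.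
  - apply (is_lim_scal_l _ C _ 0), (Hopp exp), is_lim_exp_m.
  - apply (Hopp (fun y => y * exp y)), is_lim_mul_exp_m.
Qed.

Theorem lemma2 (eps deps : R -> R)
  (Hder : forall t, 0 <= t -> is_derive_nonneg eps t (deps t))
  (Hpos : forall t, 0 <= t -> 0 < eps t)
  (Hdec : forall t, 0 <= t -> deps t < 0)
  (Hlim : is_lim (fun t => deps t / (eps t) ^ 2) p_infty 0) :
  is_lim (fun t => exp (- t) / eps t) p_infty 0.
Proof.
  destruct (Hlim (fun y => -1 < y) ltac:(apply open_gt; lra)) as [T HT].
  set (a := Rmax T 0 + 1).
  assert (HTa : T < a) by (pose proof (Rmax_l T 0); unfold a; lra).
  assert (Ha0 : 0 < a) by (pose proof (Rmax_r T 0); unfold a; lra).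
  assert (Hinv : forall t, a <= t -> / eps t <= / eps a + 1 * (t - a)).
  { apply (le_affine_of_derive_le (fun x => / eps x) (fun x => - deps x / eps x ^ 2)).
    - intros x Hx. apply is_derive_inv.
      + apply is_derive_of_is_derive_nonneg, Hder; lra.
      + apply Rgt_not_eq, Hpos; lra.
    - intros x Hx. specialize (HT x ltac:(lra)). cbv beta in HT.
      unfold Rdiv in *. rewrite Ropp_mult_distr_l_reverse. lra. }
  apply (is_lim_le_le_loc (fun _ => 0) (fun t => exp (- t) * (/ eps a - a + t))).
  - exists a. intros t Ht.
    pose proof (Hpos t ltac:(lra)). pose proof (exp_pos (- t)).
    pose proof (Hinv t ltac:(lra)).
    unfold Rdiv. split.
    + apply Rlt_le, Rmult_lt_0_compat, Rinv_0_lt_compat; assumption.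
    + apply Rmult_le_compat_l; lra.
  - apply is_lim_const.
  - apply is_lim_exp_opp_mul_affine.
Qed.
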